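(* Let $n\ge 5$ be odd. Then $E_n=\{x+2^{n-2}: x\in E_{n-1}\}\cup\{x+2^{n-1}: x\in E_{n-1}\}$; that is, listing $E_n$ in increasing order, one obtains the elements of $E_{n-1}$ each increased by $2^{n-2}$ (in increasing order), immediately followed by the elements of $E_{n-1}$ each increased by $2^{n-1}$ (in increasing order).
   Context: Let $D$ (OEIS A036991) be the set of nonnegative integers $m$ such that, reading the binary expansion of $m$ from the least significant bit to the most significant bit, at every point the number of 1's read so far is at least the number of 0's read so far. For $n\ge1$ let $M_n=2^n-1$ and let the $n$-level be $E_n=D\cap(M_{n-1},M_n]$, i.e. the elements of $D$ whose binary expansion has exactly $n$ digits. *)

From mathcomp Require Import all_boot.
Set Implicit Arguments. Unset Strict Implicit. Unset Printing Implicit Defensive.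

Fixpoint bits_fuel (k m : nat) : seq bool :=
  match k with
  | 0 => [::]
  | k'.+1 => if m == 0 then [::] else odd m :: bits_fuel k' m./2
  end.
Definition bits (m : nat) : seq bool := bits_fuel m m.

(* m is in D (OEIS A036991): reading bits from LSB to MSB, every prefix has
   at least as many 1's as 0's. *)
Definition inD (m : nat) : bool :=
  let s := bits m in
  all (fun i => count_mem false (take i s) <= count_mem true (take i s))
      (iota 0 (size s).+1).

Definition Mn (n : nat) : nat := 2 ^ n - 1.

Definition inEn (n m : nat) : bool := inD m && (Mn n.-1 < m <= Mn n).

Definition Elist (n : nat) : seq nat := [seq m <- iota 0 (2 ^ n) | inEn n m].

From mathcomp Require Import all_boot zify.

Set Implicit Arguments.
Unset Strict Implicit.
Unset Printing Implicit Defensive.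

(* Write an element m of E_(N+2) as  y ++ [:: b; true]  in binary (least
   significant digit first), with size y = N.  Deleting the digit b gives an
   element x of E_(N+1) with m = x + 2^(N+b), and inserting it back preserves
   the prefix condition: the only new prefix is y ++ [:: b], and since N is
   odd the 1's of y strictly outnumber its 0's, so b may even be a 0.  Hence
   E_(N+2) is the union of E_(N+1) + 2^N and E_(N+1) + 2^(N+1), the first
   block lying below 3 * 2^N and the second above it. *)

Fixpoint nat_of_bits (s : seq bool) : nat :=
  if s is b :: s' then b + 2 * nat_of_bits s' else 0.

Lemma nat_of_bits_rcons s b :
  nat_of_bits (rcons s b) = nat_of_bits s + 2 ^ size s * b.
Proof.
by elim: s => [|c s IH] /=; [rewrite mul1n addn0 | rewrite IH expnS; lia].
Qed.

Lemma nat_of_bits_lt s : nat_of_bits s < 2 ^ size s.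
Proof. by elim: s => [|b s IH] //=; rewrite expnS; case: b => /=; lia. Qed.

Lemma nat_of_bits_rcons_true_bounds s :
  2 ^ size s <= nat_of_bits (rcons s true) < 2 ^ (size s).+1.
Proof. by rewrite nat_of_bits_rcons expnS; have := nat_of_bits_lt s; lia. Qed.

Lemma exists_nat_of_bits_rcons_true m :
  0 < m -> exists s, m = nat_of_bits (rcons s true).
Proof.
elim/ltn_ind: m => m IH m_gt0.
have m_half := odd_double_half m; rewrite -muln2 in m_half.
have [m_eq1 | half_gt0] := posnP m./2.
  by exists [::]; move: m_half; rewrite m_eq1 /=; case: (odd m); lia.
have [|s Es] := IH m./2 _ half_gt0; first lia.
by exists (odd m :: s); rewrite /= -Es; lia.
Qed.

Lemma bits_fuel_eq k k' m : m <= k -> m <= k' -> bits_fuel k m = bits_fuel k' m.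
Proof.
elim: k k' m => [|k IH] [|k'] m /=; rewrite ?leqn0; try by move=> /eqP->.
  by move=> _ /eqP->.
have := odd_double_half m; rewrite -muln2 => m_half m_le m_le'.
by case: eqP => // m_neq0; rewrite (IH k') //; lia.
Qed.

Lemma bitsE m : bits m = if m == 0 then [::] else odd m :: bits m./2.
Proof.
case: m => [|m] //; rewrite /bits /=; congr (_ :: _); apply: bits_fuel_eq => //.
by have := odd_double_half m.+1; rewrite -muln2; lia.
Qed.

Lemma bits_nat_of_bits_rcons_true s :
  bits (nat_of_bits (rcons s true)) = rcons s true.
Proof.
elim: s => [|b s IH] //=; set m := nat_of_bits (rcons s true).
have m_gt0 : 0 < m.
  by have := nat_of_bits_rcons_true_bounds s; have := expn_gt0 2 (size s); lia.
rewrite bitsE; case: eqP => [|_]; first lia.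
by rewrite oddD oddM /= addbF oddb mul2n half_bit_double IH.
Qed.

Definition ballot (s : seq bool) : bool :=
  all (fun i => count_mem false (take i s) <= count_mem true (take i s))
      (iota 0 (size s).+1).

Lemma inD_ballot m : inD m = ballot (bits m).
Proof. by []. Qed.

Lemma count_mem_true_false (s : seq bool) :
  count_mem true s + count_mem false s = size s.
Proof.
rewrite -(count_predC (pred1 true)); congr (_ + _).
by apply: eq_count => b /=; rewrite eqbF_neg eqb_id.
Qed.

Lemma ballot_rcons s b : ballot (rcons s b) =
  ballot s && (count_mem false (rcons s b) <= count_mem true (rcons s b)).
Proof.
rewrite /ballot size_rcons -addn1 iotaD all_cat all_seq1 add0n.
rewrite take_oversize ?size_rcons //; congr (_ && _).
apply: eq_in_all => i; rewrite mem_iota add0n ltnS => le_i.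
by rewrite -cats1 takel_cat.
Qed.

Lemma ballot_count s : ballot s -> count_mem false s <= count_mem true s.
Proof.
move/allP/(_ (size s)); rewrite take_oversize //; apply.
by rewrite mem_iota add0n ltnS leqnn.
Qed.

Lemma ballot_count_odd s :
  ballot s -> odd (size s) -> count_mem false s < count_mem true s.
Proof.
move=> /ballot_count; rewrite leq_eqVlt -count_mem_true_false.
by case/orP => [/eqP-> | //]; rewrite addnn odd_double.
Qed.

Lemma ballot_rcons_true s : ballot (rcons s true) = ballot s.
Proof.
rewrite ballot_rcons -cats1 !count_cat /= !addn0 addn1.
by apply: andb_idr => /ballot_count/leqW.
Qed.

Lemma ballot_insert_before_last s b :
  odd (size s) -> ballot (rcons (rcons s b) true) = ballot (rcons s true).
Proof.
move=> odd_s; rewrite !ballot_rcons_true ballot_rcons; apply: andb_idr => bal_s.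
have := ballot_count_odd bal_s odd_s.
rewrite -cats1 !count_cat /=.
by case: b; rewrite /= !addn0 ?addn1 // => /ltnW/leqW.
Qed.

Lemma Mn_level k m : (Mn k < m <= Mn k.+1) = (2 ^ k <= m < 2 ^ k.+1).
Proof.
by rewrite /Mn expnS; have := expn_gt0 2 k; case: leqP; case: ltnP; lia.
Qed.

Lemma inEn_bounds k m : inEn k.+1 m -> 2 ^ k <= m < 2 ^ k.+1.
Proof. by rewrite /inEn Mn_level => /andP[]. Qed.

Lemma inEn_nat_of_bits s :
  inEn (size s).+1 (nat_of_bits (rcons s true)) = ballot (rcons s true).
Proof.
rewrite /inEn Mn_level nat_of_bits_rcons_true_bounds andbT.
by rewrite inD_ballot bits_nat_of_bits_rcons_true.
Qed.

Lemma level_nat_of_bits k m :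
  2 ^ k <= m < 2 ^ k.+1 ->
  exists2 s, size s = k & m = nat_of_bits (rcons s true).
Proof.
move=> m_bounds; have [|s Em] := exists_nat_of_bits_rcons_true (m := m).
  by case/andP: m_bounds => /(leq_trans _)-> //; rewrite expn_gt0.
exists s => //.
rewrite -(trunc_log_eq _ m_bounds) // (trunc_log_eq (n := size s)) //.
by rewrite Em nat_of_bits_rcons_true_bounds.
Qed.

Lemma nat_of_bits_insert_before_last s b :
  nat_of_bits (rcons (rcons s b) true) =
  nat_of_bits (rcons s true) + 2 ^ (size s + b).
Proof.
rewrite !nat_of_bits_rcons size_rcons.
by case: b; rewrite /= ?addn0 ?addn1 expnS; lia.
Qed.

Lemma inEn_shift N (b : bool) x : odd N -> 2 ^ N <= x < 2 ^ N.+1 ->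
  inEn N.+2 (x + 2 ^ (N + b)) = inEn N.+1 x.
Proof.
move=> odd_N /level_nat_of_bits[s Ns ->]; subst N.
have := inEn_nat_of_bits (rcons s b).
rewrite size_rcons nat_of_bits_insert_before_last => ->.
by rewrite inEn_nat_of_bits ballot_insert_before_last.
Qed.

Lemma mem_Elist k m : (m \in Elist k) = inEn k m.
Proof.
rewrite mem_filter mem_iota; apply: andb_idr => /and3P[_ _ le_m].
by have := expn_gt0 2 k; rewrite /Mn in le_m; lia.
Qed.

Lemma mem_map_addn c s m :
  (m \in [seq x + c | x <- s]) = (c <= m) && (m - c \in s).
Proof.
apply/mapP/andP => [[x x_in ->] | [le_cm m_in]].
  by rewrite addnK leq_addl.
by exists (m - c); rewrite ?subnK.
Qed.

Lemma inEn_odd_split N m : odd N ->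
  inEn N.+2 m = (m \in [seq x + 2 ^ N | x <- Elist N.+1])
             || (m \in [seq x + 2 ^ N.+1 | x <- Elist N.+1]).
Proof.
move=> odd_N; rewrite !mem_map_addn !mem_Elist.
have shift (b : bool) : 2 ^ (N + b) <= m ->
    2 ^ N <= m - 2 ^ (N + b) < 2 ^ N.+1 ->
    inEn N.+1 (m - 2 ^ (N + b)) = inEn N.+2 m.
  by move=> le_m x_bounds; rewrite -(inEn_shift b odd_N x_bounds) subnK.
have shift_low := shift false; have shift_high := shift true.
rewrite addn0 in shift_low; rewrite addn1 in shift_high.
have pos_N : 0 < 2 ^ N by rewrite expn_gt0.
have exp1 := expnS 2 N; have exp2 := expnS 2 N.+1.
apply/idP/orP => [Em | [] /andP[le_m x_in]]; last 2 first.
- by have /andP[lo hi] := inEn_bounds x_in; rewrite -shift_low //; lia.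
- by have /andP[lo hi] := inEn_bounds x_in; rewrite -shift_high //; lia.
have /andP[lo hi] := inEn_bounds Em.
case: (ltnP m (3 * 2 ^ N)) => [lt_m | ge_m]; [left | right].
  by rewrite shift_low ?Em ?andbT; lia.
by rewrite shift_high ?Em ?andbT; lia.
Qed.

Lemma sorted_Elist k : sorted ltn (Elist k).
Proof. exact/sorted_filter/iota_ltn_sorted/ltn_trans. Qed.

Lemma sorted_cat_allrel (T : Type) (r : rel T) (s t : seq T) : transitive r ->
  sorted r s -> sorted r t -> allrel r s t -> sorted r (s ++ t).
Proof.
by move=> r_tr; rewrite !sorted_pairwise // pairwise_cat => -> -> ->.
Qed.

Lemma Elist_odd_split N : odd N ->
  Elist N.+2 = [seq x + 2 ^ N | x <- Elist N.+1]
               ++ [seq x + 2 ^ N.+1 | x <- Elist N.+1].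
Proof.
move=> odd_N; have shift_sorted c : sorted ltn [seq x + c | x <- Elist N.+1].
  by apply/homo_sorted/sorted_Elist => x y /=; rewrite ltn_add2r.
apply: (irr_sorted_eq ltn_trans ltnn); first exact: sorted_Elist.
  apply: sorted_cat_allrel ltn_trans _ _ _; rewrite ?shift_sorted //.
  apply/allrelP => _ _ /mapP[x x_in ->] /mapP[y y_in ->].
  rewrite !mem_Elist in x_in y_in.
  move: (inEn_bounds x_in) (inEn_bounds y_in).
  by rewrite expnS; lia.
by move=> m; rewrite mem_cat mem_Elist inEn_odd_split.
Qed.

Lemma has_eq_addn c s m :
  has (fun x => m == x + c) s = (m \in [seq x + c | x <- s]).
Proof. by apply/hasP/mapP => -[x x_in Em]; exists x => //; apply/eqP. Qed.

Theorem proposition7 (n : nat) :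
  5 <= n -> odd n ->
  (forall m, inEn n m =
     has (fun x => m == x + 2 ^ (n - 2)) (Elist n.-1)
     || has (fun x => m == x + 2 ^ (n - 1)) (Elist n.-1))
  /\
  Elist n = [seq x + 2 ^ (n - 2) | x <- Elist n.-1]
            ++ [seq x + 2 ^ (n - 1) | x <- Elist n.-1].
Proof.
case: n => [|[|N]] // _; rewrite /= negbK !subSS !subn0 => odd_N.
split; last exact: Elist_odd_split.
by move=> m; rewrite !has_eq_addn inEn_odd_split.
Qed.
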